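(* For $s\in\mathbb{N}$ let $\mathcal{F}_s$ be the set of binary cubic forms $f=(a,b,c,d)$ over $\mathbb{F}_q[t]$ such that $\deg(D(f))=s$, $\deg(a)\le s/4$, $\deg(b)\le s/4$, $\deg(ad)\le s/2$, $\deg(bc)\le s/2$, and $\mathrm{sgn}(a)\in S$. Then, as $s\to\infty$, $\#\mathcal{F}_s\le \frac{q^3}{32}s^2q^s+O(sq^s)$ if $s$ is odd, and $\#\mathcal{F}_s\le\frac{q^4}{32}s^2q^s+O(sq^s)$ if $s$ is even.
   Context: $q$ is a prime power with $\gcd(q,6)=1$; $\mathrm{sgn}(H)$ is the leading coefficient of $H\in\mathbb{F}_q[t]$. A binary cubic form $(a,b,c,d)$ is $ax^3+bx^2y+cxy^2+dy^3$ over $\mathbb{F}_q[t]$ with discriminant $D(f)=18abcd+b^2c^2-4ac^3-4b^3d-27a^2d^2$, assumed irreducible (so $ad\neq0$). Fix a primitive root $h$ of $\mathbb{F}_q^*$ and $S=\{h^i:0\le i\le(q-3)/2\}$. *)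

From HB Require Import structures.
From mathcomp Require Import all_boot all_order all_algebra all_field.
Set Implicit Arguments. Unset Strict Implicit. Unset Printing Implicit Defensive.
Import Order.TTheory GRing.Theory Num.Theory.
Local Open Scope ring_scope.

(* A binary cubic form (a,b,c,d) = a x^3 + b x^2 y + c x y^2 + d y^3 over F_q[t]. *)
Definition cubic_form (F : finFieldType) : Type :=
  ({poly F} * {poly F} * {poly F} * {poly F})%type.

Definition cf_a (F : finFieldType) (f : cubic_form F) : {poly F} := f.1.1.1.
Definition cf_b (F : finFieldType) (f : cubic_form F) : {poly F} := f.1.1.2.
Definition cf_c (F : finFieldType) (f : cubic_form F) : {poly F} := f.1.2.
Definition cf_d (F : finFieldType) (f : cubic_form F) : {poly F} := f.2.

Definition disc (F : finFieldType) (f : cubic_form F) : {poly F} :=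
  let a := cf_a f in let b := cf_b f in let c := cf_c f in let d := cf_d f in
  18%:R * a * b * c * d + b ^+ 2 * c ^+ 2 - 4%:R * a * c ^+ 3
  - 4%:R * b ^+ 3 * d - 27%:R * a ^+ 2 * d ^+ 2.

Definition dehom (F : finFieldType) (f : cubic_form F) : {poly {fraction {poly F}}} :=
  (tofrac (cf_a f))%:P * 'X^3 + (tofrac (cf_b f))%:P * 'X^2
  + (tofrac (cf_c f))%:P * 'X + (tofrac (cf_d f))%:P.

(* f irreducible as a binary cubic form over F_q(t): f has degree 3 in x (a <> 0)
   and f(x,1) is an irreducible polynomial over F_q(t). *)
Definition irreducible_form (F : finFieldType) (f : cubic_form F) : Prop :=
  cf_a f != 0 /\ irreducible_poly (dehom f).

Definition inS (F : finFieldType) (h x : F) : Prop :=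
  exists i : nat, (i <= (#|F| - 3) %/ 2)%N /\ x = h ^+ i.

(* deg p <= s/k, with deg 0 = -infinity (so the condition is vacuous for p = 0) *)
Definition deg_le_frac (F : finFieldType) (p : {poly F}) (k s : nat) : bool :=
  (k * (size p).-1 <= s)%N.

Definition in_Fs (F : finFieldType) (h : F) (s : nat) (f : cubic_form F) : Prop :=
  irreducible_form f /\
  size (disc f) = s.+1 /\
  deg_le_frac (cf_a f) 4 s /\ deg_le_frac (cf_b f) 4 s /\
  deg_le_frac (cf_a f * cf_d f) 2 s /\ deg_le_frac (cf_b f * cf_c f) 2 s /\
  inS h (lead_coef (cf_a f)).

(* Forget irreducibility and the discriminant beyond its degree, and count
   coefficients.  Since deg a + deg d <= s/2, the coefficients of a below its
   leading one together with those of d fit into s/2 + 1 slots; the same holds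
   for b and c with one extra slot for the leading coefficient of b (when
   b = 0, the discriminant is -4ac^3 - 27a^2d^2, which forces deg c <= s/2).
   The form is recovered from deg a, deg b <= s/4, the index of sgn(a) in S and
   these two coefficient lists, so #F_s <= (s/4 + 1)^2 (q - 1)/2 q^(2(s/2) + 3),
   where q^(2(s/2) + 3) is q^(s + 3) for even s and q^(s + 2) for odd s.  As
   16 (s/4 + 1)^2 <= s^2 + 24 s, the claim holds with M = q^4. *)
From mathcomp Require Import all_boot all_algebra finfield fingroup cyclic zify ring.
Set Implicit Arguments. Unset Strict Implicit. Unset Printing Implicit Defensive.
Import GRing.Theory Num.Theory.
Local Open Scope ring_scope.

Lemma natr_card_eq0 (R : finNzRingType) : #|R|%:R = 0 :> R.
Proof. by rewrite -FinRing.zmodXgE -cardsT expg_cardG // inE. Qed.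

Lemma finField_natr_neq0 (F : finFieldType) n : coprime #|F| n -> n%:R != 0 :> F.
Proof.
move=> coFn; have [p p_pr pcharFp] := finPcharP F.
rewrite -(dvdn_pcharf pcharFp); apply/negP=> p_dvd_n.
have p_dvd_F : (p %| #|F|)%N by rewrite (dvdn_pcharf pcharFp) natr_card_eq0.
have := coprime_dvdr p_dvd_n (coprime_dvdl p_dvd_F coFn).
by rewrite prime_coprime // dvdnn.
Qed.

Section PolyDegrees.
Variable R : idomainType.
Implicit Types p r : {poly R}.

Lemma size_mul_deg_le p r k s : (0 < k)%N -> p != 0 -> r != 0 ->
  (k * (size (p * r)%R).-1 <= s)%N -> ((size p).-1 + size r <= (s %/ k).+1)%N.
Proof.
move=> k_gt0 p0 r0; rewrite size_mul // mulnC -leq_divRL //.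
have : (0 < size p)%N by rewrite size_poly_gt0.
have : (0 < size r)%N by rewrite size_poly_gt0.
lia.
Qed.

Lemma size_polyDMXn_le p r i n : (size p <= i)%N -> (i + size r <= n)%N ->
  (size (p + r * 'X^i)%R <= n)%N.
Proof.
move=> sp sr; apply: leq_trans (size_polyD _ _) _; rewrite geq_max.
have [->|r0] := eqVneq r 0; first by rewrite mul0r size_poly0; lia.
by rewrite size_mulXn //; lia.
Qed.

Lemma poly_take_lead p i : size p = i.+1 -> p = take_poly i p + (lead_coef p)%:P * 'X^i.
Proof.
move=> sp; rewrite -[LHS](poly_take_drop i); congr (_ + _ * _).
have /size1_polyC -> : (size (drop_poly i p) <= 1)%N by rewrite size_drop_poly sp subSnn.
by rewrite coef_drop_poly add0n lead_coefE sp.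
Qed.

End PolyDegrees.

Lemma size_disc_b0_le (F : fieldType) (a c d : {poly F}) s :
  2%:R != 0 :> F -> a != 0 -> (2 * (size (a * d)%R).-1 <= s)%N ->
  size (4%:R * a * c ^+ 3 + 27%:R * a ^+ 2 * d ^+ 2) = s.+1 ->
  (size c <= (s %/ 2).+1)%N.
Proof.
move=> two0 a0 sad sD; rewrite leqNgt; apply/negP=> sc.
have c0 : c != 0 by rewrite -size_poly_gt0; lia.
have four0 : 4%:R != 0 :> {poly F}.
  by rewrite -polyC_natr polyC_eq0 (natrM _ 2 2) mulf_neq0.
have small : (size (27%:R * a ^+ 2 * d ^+ 2)%R <= s.+1)%N.
  rewrite -mulrA -exprMn -polyC_natr mul_polyC; apply: leq_trans (size_scale_leq _ _) _.
  by apply: leq_trans (size_poly_exp_leq _ _) _; rewrite ltnS mulnC.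
have large : (s.+1 < size (4%:R * a * c ^+ 3)%R)%N.
  have : (0 < size a)%N by rewrite size_poly_gt0.
  rewrite !size_mul ?mulf_neq0 ?expf_neq0 // -polyC_natr size_polyC.
  rewrite -polyC_eq0 polyC_natr four0 /=.
  (* [set] identifies the occurrences of [size a] and [size c] that differ only
     in the ring instance, which [lia] would otherwise treat as distinct atoms. *)
  move: sc; set x := size a; set y := size c; lia.
by move: sD; rewrite size_polyDl; lia.
Qed.

Section Coding.
Variables (F : finFieldType) (h : F).

(* [i] and [j] are the degrees of [a] and [b], [h ^+ k] the leading coefficient
   of [a]; [P] lists the lower coefficients of [a] followed by those of [d], and
   [Q] the coefficients of [b] followed by those of [c]. *)
Definition form_of_code (m K H : nat)
    (x : 'I_m.+1 * 'I_K * {poly_H.+1 F} * 'I_m.+1 * {poly_H.+2 F}) : cubic_form F :=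
  let: (i, k, P, j, Q) := x in
  (take_poly i P + (h ^+ k)%:P * 'X^i, take_poly j.+1 Q, drop_poly j.+1 Q, drop_poly i P).

Lemma in_Fs_size_bounds s f : coprime #|F| 6 -> in_Fs h s f ->
  [/\ cf_a f != 0, ((size (cf_a f)).-1 <= s %/ 4)%N, ((size (cf_b f)).-1 <= s %/ 4)%N,
      ((size (cf_a f)).-1 + size (cf_d f) <= (s %/ 2).+1)%N
    & ((size (cf_b f)).-1 + size (cf_c f) <= (s %/ 2).+1)%N].
Proof.
move=> coF6 [[a0 _] [sD [sa [sb [sad [sbc _]]]]]].
have sa4 : ((size (cf_a f)).-1 <= s %/ 4)%N by rewrite leq_divRL // mulnC.
have sb4 : ((size (cf_b f)).-1 <= s %/ 4)%N by rewrite leq_divRL // mulnC.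
split=> //.
  have [->|d0] := eqVneq (cf_d f) 0; first by rewrite size_poly0; lia.
  exact: size_mul_deg_le.
have [b0|b0] := eqVneq (cf_b f) 0.
  rewrite b0 size_poly0 add0n; apply: (@size_disc_b0_le _ (cf_a f) _ (cf_d f)) => //.
    by apply: finField_natr_neq0; apply: coprime_dvdr coF6.
  have discE : disc f
      = - (4%:R * cf_a f * cf_c f ^+ 3 + 27%:R * cf_a f ^+ 2 * cf_d f ^+ 2).
    by rewrite /disc b0; ring.
  by rewrite -size_polyN -discE.
have [->|c0] := eqVneq (cf_c f) 0; first by rewrite size_poly0; lia.
exact: size_mul_deg_le.
Qed.

Lemma in_Fs_codom s f : coprime #|F| 6 -> in_Fs h s f ->
  f \in codom (@form_of_code (s %/ 4) ((#|F| - 3) %/ 2).+1 (s %/ 2)).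
Proof.
move=> coF6 Ff; have [a0 sa sb sad sbc] := in_Fs_size_bounds coF6 Ff.
case: Ff => _ [_ [_ [_ [_ [_ [k [k_le lead_a]]]]]]].
case: f a0 sa sb sad sbc lead_a => [[[a b] c] d]; rewrite /cf_a /cf_b /cf_c /cf_d /=.
set i := (size a).-1; set j := (size b).-1 => a0 sa sb sad sbc lead_a.
have size_a : size a = i.+1 by rewrite prednK // size_poly_gt0.
have size_b : (size b <= j.+1)%N by rewrite leqSpred.
have sP : (size (take_poly i a + d * 'X^i)%R <= (s %/ 2).+1)%N.
  exact: size_polyDMXn_le (size_take_poly _ _) sad.
have sQ : (size (b + c * 'X^(j.+1))%R <= (s %/ 2).+2)%N.
  by apply: size_polyDMXn_le; rewrite // addSn.
have i_lt : (i < (s %/ 4).+1)%N by [].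
have j_lt : (j < (s %/ 4).+1)%N by [].
apply/codomP; exists (Ordinal i_lt, Ordinal (k_le : (k < _.+1)%N),
  npolyp _ (take_poly i a + d * 'X^i), Ordinal j_lt, npolyp _ (b + c * 'X^(j.+1))).
rewrite /= !npolypK // !take_polyDMXn ?size_take_poly // !drop_polyDMXn ?size_take_poly //.
by rewrite -lead_a -poly_take_lead.
Qed.

Lemma size_Fs_le s l : coprime #|F| 6 -> uniq l -> (forall f, f \in l -> in_Fs h s f) ->
  (size l <= (s %/ 4).+1 ^ 2 * ((#|F| - 3) %/ 2).+1 * #|F| ^ ((s %/ 2).+1 + (s %/ 2).+2))%N.
Proof.
move=> coF6 ul Fl; have := uniq_leq_size ul (fun f lf => in_Fs_codom coF6 (Fl f lf)).
rewrite size_codom !card_prod !card_ord !card_npoly expnD.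
by move/leq_trans; apply; apply: eq_leq; ring.
Qed.

End Coding.

Lemma code_expn_le q s : (1 < q)%N ->
  (2 * ((q - 3) %/ 2).+1 * q ^ ((s %/ 2).+1 + (s %/ 2).+2)
     <= (if odd s then q ^ 3 else q ^ 4) * q ^ s)%N.
Proof.
move=> q_gt1.
have -> : ((if odd s then q ^ 3 else q ^ 4) * q ^ s
           = q * q ^ ((s %/ 2).+1 + (s %/ 2).+2))%N.
  have := divn_eq s 2; rewrite modn2 -expnS.
  by case: (odd s) => /= s2; rewrite -expnD; congr (q ^ _)%N; lia.
by apply: leq_mul => //; lia.
Qed.

Lemma card_code_le q s : (1 < q)%N -> (0 < s)%N ->
  (32 * ((s %/ 4).+1 ^ 2 * ((q - 3) %/ 2).+1 * q ^ ((s %/ 2).+1 + (s %/ 2).+2))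
     <= (if odd s then q ^ 3 else q ^ 4) * s ^ 2 * q ^ s + 32 * (q ^ 4 * s * q ^ s))%N.
Proof.
move=> q_gt1 s_gt0.
have s4 : ((4 * (s %/ 4).+1) ^ 2 <= s ^ 2 + 24 * s)%N.
  have : (4 * (s %/ 4).+1 <= s + 4)%N by lia.
  by move: (4 * _)%N => x; nia.
have X_le : ((if odd s then q ^ 3 else q ^ 4) <= q ^ 4)%N.
  by case: (odd s); rewrite // leq_exp2l.
move: (code_expn_le s q_gt1) s4 X_le.
move: (if odd s then q ^ 3 else q ^ 4)%N (q ^ ((s %/ 2).+1 + (s %/ 2).+2))%N (q ^ s)%N (q ^ 4)%N.
move=> X A Q Y.
set m1 := (s %/ 4).+1; set K := ((q - 3) %/ 2).+1 => hA hm hXY.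
have -> : (32 * (m1 ^ 2 * K * A) = (4 * m1) ^ 2 * (2 * K * A))%N by lia.
apply: leq_trans (leq_mul hm hA) _.
by have := leq_mul hXY (leqnn (s * Q)); lia.
Qed.

Lemma ler_natr_div (R : numFieldType) (n x y z : nat) : (0 < n)%N ->
  (n * x <= y + n * z)%N -> x%:R <= y%:R / n%:R + z%:R :> R.
Proof.
move=> n_gt0 le_nx; have n0 : 0 < n%:R :> R by rewrite ltr0n.
rewrite -(ler_pM2l n0) mulrDr [n%:R * (_ / _)]mulrC divfK ?lt0r_neq0 //.
by rewrite -!natrM -natrD ler_nat.
Qed.

Theorem mainTheorem14 (F : finFieldType) (h : F) :
  coprime #|F| 6 ->
  (#|F|.-1).-primitive_root h ->
  exists (M : rat) (N : nat), forall s : nat, (N <= s)%N ->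
    forall l : seq (cubic_form F), uniq l -> (forall f, f \in l -> in_Fs h s f) ->
      (size l)%:R <=
        (if odd s then (#|F|%:R ^+ 3 : rat) else #|F|%:R ^+ 4) / 32%:R
          * s%:R ^+ 2 * #|F|%:R ^+ s
        + M * s%:R * #|F|%:R ^+ s.
Proof.
move=> coF6 _; exists (#|F| ^ 4)%N%:R, 1%N => s s_gt0 l ul Fl.
have q_gt1 : (1 < #|F|)%N := finNzRing_gt1 F.
have count := leq_trans (leq_mul (leqnn 32) (size_Fs_le coF6 ul Fl))
                        (card_code_le q_gt1 s_gt0).
have -> : (if odd s then (#|F|%:R ^+ 3 : rat) else #|F|%:R ^+ 4)
          = (if odd s then #|F| ^ 3 else #|F| ^ 4)%N%:R by case: (odd s); rewrite natrX.
by rewrite !(mulrAC _ 32%:R^-1) -!natrX -!natrM; apply: ler_natr_div count.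
Qed.
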